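(* Let $\boldsymbol{P}$ be a feasible policy (as defined in the context). Then every entry of $\boldsymbol{Y}_{\boldsymbol{P}}$ is non-negative.
   Context: $M\ge2$ worker nodes, undirected graph with neighborhood indicators $d_{i,m}\in\{0,1\}$. $\boldsymbol{P}=[p_{i,m}]_{M\times M}$ has rows that are probability distributions; $t_{i,m}>0$ are iteration times; $\alpha>0$, $\rho>0$. Define $\overline{t}_i=\sum_m t_{i,m}p_{i,m}d_{i,m}$, $p_i=\frac{1/\overline{t}_i}{\sum_m 1/\overline{t}_m}$, $\gamma_{i,m}=\frac{d_{i,m}+d_{m,i}}{2p_{i,m}}$ (terms with $p_{i,m}=0$ taken as $0$). $\boldsymbol{Y}_{\boldsymbol{P}}=[y_{i,m}]$ with $y_{i,i}=1-2\alpha\rho\sum_{m\ne i}p_ip_{i,m}\gamma_{i,m}+\alpha^2\rho^2\sum_{m\ne i}(p_ip_{i,m}\gamma_{i,m}^2+p_mp_{m,i}\gamma_{m,i}^2)$ and, for $m\ne i$, $y_{i,m}=\alpha\rho(p_ip_{i,m}\gamma_{i,m}+p_mp_{m,i}\gamma_{m,i})-\alpha^2\rho^2(p_ip_{i,m}\gamma_{i,m}^2+p_mp_{m,i}\gamma_{m,i}^2)$. $\boldsymbol{P}$ is feasible if: there is $\overline{t}$ with $\overline{t}=\frac1M\sum_m t_{i,m}p_{i,m}d_{i,m}$ for all $i$; $p_{i,m}>\alpha\rho(d_{i,m}+d_{m,i})$ for all $i\ne m$ with $d_{i,m}\ne0$; $p_{i,m}=0$ whenever $d_{i,m}=0$;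 and $\sum_m p_{i,m}=1$ for all $i$. *)

From HB Require Import structures.
From mathcomp Require Import all_boot all_order all_algebra.
Set Implicit Arguments. Unset Strict Implicit. Unset Printing Implicit Defensive.
Import Order.TTheory GRing.Theory Num.Theory.
Local Open Scope ring_scope.

Section Defs.
Variables (R : realFieldType) (M : nat).
Variable d : 'I_M -> 'I_M -> bool.   (* neighborhood indicators d_{i,m} *)
Variable P : 'M[R]_M.
Variable t : 'I_M -> 'I_M -> R.      (* iteration times t_{i,m} *)
Variables alpha rho : R.

Definition dR (i m : 'I_M) : R := (d i m)%:R.

Definition tbar (i : 'I_M) : R := \sum_(m < M) t i m * P i m * dR i m.

Definition pnode (i : 'I_M) : R := (tbar i)^-1 / (\sum_(m < M) (tbar m)^-1).

Definition gamma (i m : 'I_M) : R :=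
  if P i m == 0 then 0 else (dR i m + dR m i) / (2 * P i m).

Definition Ymat : 'M[R]_M :=
  \matrix_(i < M, m < M)
    if i == m then
      1 - 2 * alpha * rho * (\sum_(k < M | k != i) pnode i * P i k * gamma i k)
      + alpha ^+ 2 * rho ^+ 2 *
        (\sum_(k < M | k != i)
           (pnode i * P i k * (gamma i k) ^+ 2 + pnode k * P k i * (gamma k i) ^+ 2))
    else
      alpha * rho * (pnode i * P i m * gamma i m + pnode m * P m i * gamma m i)
      - alpha ^+ 2 * rho ^+ 2 *
        (pnode i * P i m * (gamma i m) ^+ 2 + pnode m * P m i * (gamma m i) ^+ 2).

Definition feasible : Prop :=
  [/\ exists tb : R, forall i, tb = M%:R^-1 * (\sum_(m < M) t i m * P i m * dR i m),
      forall i m, i != m -> d i m -> alpha * rho * (dR i m + dR m i) < P i m,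
      forall i m, ~~ d i m -> P i m = 0
    & forall i, \sum_(m < M) P i m = 1].

End Defs.

From HB Require Import structures.
From mathcomp Require Import all_boot all_order all_algebra.
From mathcomp Require Import ring lra.
Import Order.TTheory GRing.Theory Num.Theory.
Set Implicit Arguments. Unset Strict Implicit. Unset Printing Implicit Defensive.
Local Open Scope ring_scope.

(* With symmetric neighbourhoods, gamma_{i,m} = d_{i,m} / p_{i,m} (Rocq's x / 0 = 0
   matches the convention gamma = 0 when p_{i,m} = 0), so feasibility, i.e.
   p_{i,m} > 2 alpha rho on edges, gives 2 alpha rho gamma_{i,m} <= 1 off the
   diagonal.  Each off-diagonal summand of Y_P then has the form
   alpha rho p gamma (1 - alpha rho gamma) >= 0, while on the diagonal
   2 alpha rho sum_{k <> i} p_i p_{i,k} gamma_{i,k} <= p_i sum_k p_{i,k} = p_i <= 1. *)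

Lemma divr_sum_le1 (R : realFieldType) (I : finType) (f : I -> R) (i : I) :
  (forall j, 0 <= f j) -> f i / \sum_j f j <= 1.
Proof.
move=> f_ge0; have fi_le_sum : f i <= \sum_j f j.
  by rewrite (bigD1 i) //= lerDl sumr_ge0.
have [fi_gt0 | fi_le0] := ltrP 0 (f i).
  by rewrite ler_pdivrMr ?mul1r // (lt_le_trans fi_gt0).
have -> : f i = 0 by apply/le_anti; rewrite fi_le0 f_ge0.
by rewrite mul0r ler01.
Qed.

Section YmatNonneg.
Variables (R : realFieldType) (M : nat) (d : 'I_M -> 'I_M -> bool).
Variables (P : 'M[R]_M) (t : 'I_M -> 'I_M -> R) (alpha rho : R).
Hypothesis d_sym : forall i m, d i m = d m i.
Hypothesis P_nonneg : forall i m, 0 <= P i m.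
Hypothesis P_rows : forall i, \sum_(m < M) P i m = 1.
Hypothesis t_pos : forall i m, 0 < t i m.
Hypothesis ar_gt0 : 0 < alpha * rho.
Hypothesis P_gt_edge : forall i m, i != m -> d i m ->
  alpha * rho * (dR R d i m + dR R d m i) < P i m.

Lemma dR_ge0 i m : 0 <= dR R d i m.
Proof. exact: ler0n. Qed.

Lemma gammaE i m : gamma d P i m = dR R d i m / P i m.
Proof.
rewrite /gamma; have -> : dR R d m i = dR R d i m by rewrite /dR d_sym.
rewrite -mulr2n -mulr_natl; have [-> | P_neq0] := eqVneq.
  by rewrite invr0 mulr0.
by field; rewrite P_neq0 ?pnatr_eq0.
Qed.

Lemma gamma_ge0 i m : 0 <= gamma d P i m.
Proof. by rewrite gammaE divr_ge0 ?dR_ge0. Qed.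

Lemma ar_gamma_le_half i m : i != m -> 2 * (alpha * rho) * gamma d P i m <= 1.
Proof.
move=> im; rewrite gammaE /dR; case dim: (d i m) => /=; last by rewrite mul0r mulr0 ler01.
have := P_gt_edge im dim; rewrite /dR (d_sym m) dim /=.
move: ar_gt0; set a := alpha * rho => a_gt0 edge.
have P_gt0 : 0 < P i m by lra.
by rewrite mul1r ler_pdivrMr // mul1r; lra.
Qed.

Lemma edge_term_ge0 i m : i != m ->
  0 <= alpha * rho * (P i m * gamma d P i m)
       - (alpha * rho) ^+ 2 * (P i m * gamma d P i m ^+ 2).
Proof.
move=> im; move: ar_gt0 (P_nonneg i m) (gamma_ge0 i m) (ar_gamma_le_half im).
set a := alpha * rho; set g := gamma d P i m; set p := P i m => a_gt0 p_ge0 g_ge0 ag_le.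
rewrite (_ : _ - _ = a * (p * g) * (1 - a * g)); last by ring.
have ag_ge0 : 0 <= a * g by rewrite mulr_ge0 // ltW.
apply: mulr_ge0; last by lra.
by apply: mulr_ge0; [exact: ltW | exact: mulr_ge0].
Qed.

Lemma tbar_ge0 k : 0 <= tbar d P t k.
Proof. by apply: sumr_ge0 => j _; rewrite !mulr_ge0 ?dR_ge0 // ltW. Qed.

Lemma pnode_ge0 i : 0 <= pnode d P t i.
Proof.
by rewrite divr_ge0 ?invr_ge0 ?tbar_ge0 // sumr_ge0 // => k _; rewrite invr_ge0 tbar_ge0.
Qed.

Lemma pnode_le1 i : pnode d P t i <= 1.
Proof. by apply: divr_sum_le1 => k; rewrite invr_ge0 tbar_ge0. Qed.

Lemma first_order_diag_le1 i :
  2 * alpha * rho * (\sum_(k < M | k != i) pnode d P t i * P i k * gamma d P i k) <= 1.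
Proof.
have -> : 2 * alpha * rho * (\sum_(k < M | k != i) pnode d P t i * P i k * gamma d P i k)
    = pnode d P t i * \sum_(k < M | k != i) P i k * (2 * (alpha * rho) * gamma d P i k).
  by rewrite !mulr_sumr; apply: eq_bigr => k _; ring.
have off_row_le1 : \sum_(k < M | k != i) P i k <= 1.
  by rewrite -(P_rows i) [leRHS](bigD1 i) //= lerDr.
apply: mulr_ile1; rewrite ?pnode_ge0 ?pnode_le1 //.
  by apply: sumr_ge0 => k _; rewrite mulr_ge0 // mulr_ge0 ?gamma_ge0 // mulr_ge0 // ltW.
apply: le_trans off_row_le1; apply: ler_sum => k ki.
by rewrite ler_piMr // ar_gamma_le_half // eq_sym.
Qed.

Lemma Ymat_diag_ge0 i : 0 <= Ymat d P t alpha rho i i.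
Proof.
rewrite mxE eqxx addr_ge0 ?subr_ge0 ?first_order_diag_le1 //.
rewrite mulr_ge0 ?(mulr_ge0 (sqr_ge0 _) (sqr_ge0 _)) //.
apply: sumr_ge0 => k _.
by apply: addr_ge0; rewrite mulr_ge0 ?sqr_ge0 // mulr_ge0 ?pnode_ge0.
Qed.

Lemma Ymat_offdiag_ge0 i m : i != m -> 0 <= Ymat d P t alpha rho i m.
Proof.
move=> im; rewrite mxE (negbTE im).
set E := fun i m => alpha * rho * (P i m * gamma d P i m)
                    - (alpha * rho) ^+ 2 * (P i m * gamma d P i m ^+ 2).
rewrite (_ : _ - _ = pnode d P t i * E i m + pnode d P t m * E m i);
  last by rewrite /E; ring.
by rewrite addr_ge0 // mulr_ge0 ?pnode_ge0 ?edge_term_ge0 // eq_sym.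
Qed.

End YmatNonneg.

Theorem lemma2 (R : realFieldType) (M : nat) (hM : (2 <= M)%N)
  (d : 'I_M -> 'I_M -> bool) (P : 'M[R]_M) (t : 'I_M -> 'I_M -> R)
  (alpha rho : R)
  (d_sym : forall i m, d i m = d m i)
  (P_nonneg : forall i m, 0 <= P i m)
  (P_rows : forall i, \sum_(m < M) P i m = 1)
  (t_pos : forall i m, 0 < t i m)
  (alpha_pos : 0 < alpha) (rho_pos : 0 < rho)
  (hfeas : feasible d P t alpha rho) :
  forall i m, 0 <= Ymat d P t alpha rho i m.
Proof.
case: hfeas => _ P_gt_edge _ _ i m.
have ar_gt0 : 0 < alpha * rho by rewrite mulr_gt0.
have [-> | im] := eqVneq i m.
  exact: (Ymat_diag_ge0 d_sym P_nonneg P_rows t_pos ar_gt0 P_gt_edge m).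
exact: (Ymat_offdiag_ge0 d_sym P_nonneg t_pos ar_gt0 P_gt_edge im).
Qed.
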